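(* Let $P_1$ be the substitution on words over the alphabet $\{\mathtt R,\mathtt r,\mathtt L,\mathtt l,\mathtt S,\mathtt s\}$ given by $\mathtt R\mapsto\mathtt{Rr}$, $\mathtt r\mapsto\mathtt S$, $\mathtt L\mapsto\mathtt S$, $\mathtt l\mapsto\mathtt{Ll}$, $\mathtt S\mapsto\mathtt{Rl}$, $\mathtt s\mapsto\mathtt{Lr}$ (applied letterwise), and let $a_n$ be the number of letters of the word $P_1^n(\mathtt L)$, $n\ge 0$ (this is the length of the right side boundary of the polyomino $\mathcal S_n$ containing the Harter–Heighway dragon curve $\mathcal C_n$). Then $$a_n=a_{n-1}+2a_{n-3}\quad\text{for } n\ge 4,\qquad a_0=1,\ a_1=1,\ a_2=2.$$
   Context: $\mathcal C_n$ is the $n$-th iterate of the Harter–Heighway dragon curve (the turtle path of the word $P^n(A)$ for $P(A)=A+B$, $P(B)=A-B$), and $\mathcal S_n$ is the union of the squares having as a diagonal an edge of $\mathcal C_n$; by earlier work the right side of the boundary of $\mathcal S_n$ is traced self-avoidingly by the word $P_1^n(\mathtt L)$, one letter per boundary edge. *)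

From mathcomp Require Import all_boot.

Inductive letter : Type := R | r | L | l | S | s.

Definition P1_letter (x : letter) : seq letter :=
  match x with
  | R => [:: R; r]
  | r => [:: S]
  | L => [:: S]
  | l => [:: L; l]
  | S => [:: R; l]
  | s => [:: L; r]
  end.

Definition P1 (w : seq letter) : seq letter := flatten (map P1_letter w).

Definition a (n : nat) : nat := size (iter n P1 [:: L]).

From mathcomp Require Import all_boot.
From mathcomp Require Import zify.

Set Implicit Arguments.
Unset Strict Implicit.

(** Since a substitution acts letterwise, the length of [P1^(n+1)(x)] is the
    sum of the lengths of [P1^n(y)] over the letters [y] of [P1(x)].  Hence a
    linear recurrence that the length sequences of all six letters satisfy at
    the start is inherited at every later step; for [a_n = a_(n-1) + 2 a_(n-3)]
    this is a finite check on the first five iterates. *)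

Section Substitution.

Variables (T : Type) (f : T -> seq T).

Definition substitute (w : seq T) : seq T := flatten (map f w).

Definition subst_len (x : T) (n : nat) : nat := size (iter n substitute [:: x]).

Lemma substitute_cat u v : substitute (u ++ v) = substitute u ++ substitute v.
Proof. by rewrite /substitute map_cat flatten_cat. Qed.

Lemma iter_substitute_cat n u v :
  iter n substitute (u ++ v) = iter n substitute u ++ iter n substitute v.
Proof. by elim: n => //= n ->; rewrite substitute_cat. Qed.

Lemma size_iter_substitute n w :
  size (iter n substitute w) = \sum_(x <- w) subst_len x n.
Proof.
elim: w => [|x w IHw]; first by rewrite big_nil; elim: n => //= n /size0nil ->.
by rewrite -cat1s iter_substitute_cat size_cat IHw big_cons.
Qed.

Lemma subst_lenS x n : subst_len x n.+1 = \sum_(y <- f x) subst_len y n.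
Proof. by rewrite /subst_len iterSr /substitute /= cats0 size_iter_substitute. Qed.

Lemma subst_len_linear_rec d (c : nat -> nat) :
  (forall x, subst_len x d = \sum_(i < d) c i * subst_len x i) ->
  forall n x, subst_len x (n + d) = \sum_(i < d) c i * subst_len x (n + i).
Proof.
move=> rec0; elim=> [|n IHn] x; first exact: rec0.
rewrite addSn subst_lenS (eq_bigr _ (fun y _ => IHn y)) exchange_big /=.
by apply: eq_bigr => i _; rewrite -big_distrr /= -subst_lenS.
Qed.

End Substitution.

Lemma a_subst_len n : a n = subst_len P1_letter L n.
Proof. by []. Qed.

Lemma a_rec n : a (n + 4) = a (n + 3) + 2 * a (n + 1).
Proof.
pose c i := nth 0 [:: 0; 2; 0; 1] i.
have rec0 x : subst_len P1_letter x 4 = \sum_(i < 4) c i * subst_len P1_letter x i.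
  by rewrite !big_ord_recl big_ord0; case: x.
rewrite !a_subst_len (subst_len_linear_rec rec0) !big_ord_recl big_ord0 /=.
by rewrite /bump /c /= !add1n addn0 mul0n mul1n add0n addn0 addnC.
Qed.

Theorem theorem2 :
  (forall n : nat, 4 <= n -> a n = a n.-1 + 2 * a (n - 3)) /\
  a 0 = 1 /\ a 1 = 1 /\ a 2 = 2.
Proof.
split=> // n n_ge4.
have -> : n = (n - 4) + 4 by lia.
have -> : (n - 4 + 4).-1 = n - 4 + 3 by lia.
have -> : n - 4 + 4 - 3 = n - 4 + 1 by lia.
exact: a_rec.
Qed.
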